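(* Let $(X,d)$ be a separable metric space and $p\ge1$. If $\{\mu_n\}_{n\in\mathbb{N}}$ and $\mu$ in $\mathcal{P}_{p-1}(X)$ satisfy $\mu_n\to\mu$ in $\tau_{\mathrm{w}}^{p-1}$ and $\{\varepsilon_n\}_{n\in\mathbb{N}}$ is any bounded sequence of non-negative real numbers, then there exists a $d$-bounded set $B\subseteq X$ such that $M_p(\mu_n;\varepsilon_n)\subseteq B$ for all $n\in\mathbb{N}$.
   Context: For $r\ge0$, $\mathcal{P}_r(X)$ is the set of Borel probability measures $\mu$ on $(X,d)$ with $\int_X d^r(x,y)\,d\mu(y)<\infty$ for some (equivalently all) $x\in X$; $\mu_n\to\mu$ in $\tau_{\mathrm{w}}^r$ means $\int f\,d\mu_n\to\int f\,d\mu$ for every bounded continuous $f:(X,d)\to\mathbb{R}$ and $\int d^r(x,y)\,d\mu_n(y)\to\int d^r(x,y)\,d\mu(y)$ for all $x\in X$. For $\mu\in\mathcal{P}_{p-1}(X)$, $W_p(\mu,x,x'):=\int_X(d^p(x,y)-d^p(x',y))\,d\mu(y)$ and, for $\varepsilon\ge0$, $M_p(\mu;\varepsilon):=\{x\in X: W_p(\mu,x,x')\le\varepsilon\text{ for all } x'\in X\}$. *)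

From HB Require Import structures.
From mathcomp Require Import all_boot all_order all_algebra.
From mathcomp Require Import all_classical all_reals all_analysis.
Set Implicit Arguments. Unset Strict Implicit. Unset Printing Implicit Defensive.
Import Order.TTheory GRing.Theory Num.Theory.
Local Open Scope classical_set_scope.
Local Open Scope ring_scope.

Definition is_metric {R : realType} {X : Type} (d : X -> X -> R) : Prop :=
  [/\ forall x y, 0 <= d x y,
      forall x y, d x y = 0 <-> x = y,
      forall x y, d x y = d y x &
      forall x y z, d x z <= d x y + d y z].

Definition d_open {R : realType} {X : Type} (d : X -> X -> R) (U : set X) : Prop :=
  forall x, U x -> exists2 r : R, 0 < r & forall y, d x y < r -> U y.

Definition d_separable {R : realType} {X : Type} (d : X -> X -> R) : Prop :=
  exists D : set X, countable D /\
    forall x (e : R), 0 < e -> exists2 y, D y & d x y < e.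

Definition d_bounded {R : realType} {X : Type} (d : X -> X -> R) (B : set X) : Prop :=
  exists x0 : X, exists r : R, forall x, B x -> d x0 x <= r.

Definition d_continuous {R : realType} {X : Type} (d : X -> X -> R) (f : X -> R) : Prop :=
  forall x (e : R), 0 < e -> exists2 del : R, 0 < del &
    forall y, d x y < del -> `|f x - f y| < e.

Definition bounded_fun {R : realType} {X : Type} (f : X -> R) : Prop :=
  exists M : R, forall x, `|f x| <= M.

Section Wasserstein.
Context {R : realType} {dm : measure_display} {X : measurableType dm}.
Variable d : X -> X -> R.

(* P_r(X): probability measures with finite r-th moment (at some/any point) *)
Definition in_Pr (r : R) (mu : probability X R) : Prop :=
  forall x : X, (\int[mu]_y ((d x y) `^ r)%:E < +oo)%E.

Definition cvg_tau_w (r : R) (mun : nat -> probability X R) (mu : probability X R) : Prop :=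
  (forall f : X -> R, d_continuous d f -> bounded_fun f ->
     ((fun n => \int[mun n]_y (f y)%:E) @ \oo --> \int[mu]_y (f y)%:E)%E) /\
  (forall x : X,
     ((fun n => \int[mun n]_y ((d x y) `^ r)%:E) @ \oo --> \int[mu]_y ((d x y) `^ r)%:E)%E).

Definition Wp (p : R) (mu : probability X R) (x x' : X) : \bar R :=
  \int[mu]_y ((d x y) `^ p - (d x' y) `^ p)%:E.

Definition Mp (p : R) (mu : probability X R) (eps : R) : set X :=
  [set x | forall x' : X, (Wp p mu x x' <= eps%:E)%E].
End Wasserstein.

(* Fix x0.  Weak convergence makes balls around x0 uniformly heavy: one radius r
   carries mass > 3/4 under every mu_n, and convergence of the (p-1)-moments
   bounds them uniformly by M.  For x in M_p(mu_n; eps_n) we have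
   W_p(mu_n, x, x0) <= eps_n <= C.  With D = d(x0, x), on the ball
   d(x,y)^p - d(x0,y)^p >= (D - r)^p - r^p, and everywhere the tangent-line
   inequality for t |-> t^p gives d(x,y)^p - d(x0,y)^p >= - p D d(x0,y)^(p-1).
   Integrating, (3/4)((D - r)^p - r^p) - p D M <= C, which bounds D when p > 1;
   for p = 1 the term p D is kept on the ball, giving (3/4)(2D - 2r) - D <= C. *)

From Pilot Require Import Defs.
From HB Require Import structures.
From mathcomp Require Import all_boot all_order all_algebra.
From mathcomp Require Import all_classical all_reals all_analysis.
From mathcomp Require Import measurable_realfun ring lra.
Import Order.TTheory GRing.Theory Num.Theory.
Local Open Scope classical_set_scope.
Local Open Scope ring_scope.

Section real_facts.
Context {R : realType}.

Lemma uniform_upclosed (Q : nat -> R -> Prop) :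
  (forall n r r', r <= r' -> Q n r -> Q n r') ->
  (forall n, exists r, Q n r) ->
  (exists r, \forall n \near \oo, Q n r) ->
  exists2 r, 0 <= r & forall n, Q n r.
Proof.
move=> Qup Qn [r0 [N _ Qr0]].
have Qlt m : exists r, forall n, (n < m)%N -> Q n r.
  elim: m => [|m [r Qr]]; first by exists 0.
  have [rm Qrm] := Qn m.
  exists (Num.max r rm) => n; rewrite ltnS leq_eqVlt => /predU1P[->|/Qr Qnr].
    by apply: (Qup _ rm); rewrite ?le_max ?lexx ?orbT.
  by apply: (Qup _ r); rewrite ?le_max ?lexx.
have [r1 Qr1] := Qlt N.
exists (Num.max 0 (Num.max r0 r1)); first by rewrite le_max lexx.
move=> n; have [/Qr1 Qnr|/Qr0 Qnr] := ltnP n N.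
  by apply: (Qup _ r1); rewrite ?le_max ?lexx ?orbT.
by apply: (Qup _ r0); rewrite ?le_max ?lexx ?orbT.
Qed.

Lemma powRB_le_tangent (p a b : R) : 1 <= p -> 0 <= a -> 0 <= b ->
  b `^ p - a `^ p <= p * b `^ (p - 1) * (b - a).
Proof.
move=> p1 a0 b0; have [->|pn1] := eqVneq p 1.
  by rewrite subrr powRr0 !powRr1 // !mul1r.
have p_gt1 : 1 < p by rewrite lt_neqAle eq_sym pn1.
have p0 : 0 < p by lra.
have pB0 : p - 1 != 0 by rewrite subr_eq0.
(* Young's inequality for the conjugate exponents p and p / (p - 1). *)
pose q := p / (p - 1).
have q0 : 0 < q by rewrite divr_gt0 // subr_gt0.
have pq : p^-1 + q^-1 = 1.
  by rewrite invf_div; field; rewrite gt_eqF.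
have pBq : (p - 1) * q = p by rewrite /q mulrC divfK.
have young := conjugate_powR a0 (powR_ge0 b (p - 1)) p0 q0 pq.
rewrite -powRrM pBq in young.
have : p * (a * b `^ (p - 1)) <= a `^ p + (p - 1) * b `^ p.
  have -> : a `^ p + (p - 1) * b `^ p = p * (a `^ p / p + b `^ p / q).
    by rewrite /q; field; rewrite pB0 gt_eqF.
  by rewrite ler_wpM2l // ltW.
rewrite -(mulr_powRB1 b0 p0); lra.
Qed.

Lemma ler_powR2r (q x y : R) : 0 <= q -> 0 <= x -> x <= y -> x `^ q <= y `^ q.
Proof. by move=> q0 x0 xy; apply: ge0_ler_powR; rewrite ?nnegrE // (le_trans x0). Qed.

Definition cutoff (s : R) : R := Num.min 1 (Num.max 0 s).

Lemma cutoff_ge0 s : 0 <= cutoff s.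
Proof. by rewrite /cutoff le_min ler01 le_max lexx. Qed.

Lemma cutoff_le1 s : cutoff s <= 1.
Proof. by rewrite /cutoff ge_min lexx. Qed.

Lemma cutoff_eq1 s : 1 <= s -> cutoff s = 1.
Proof. by move=> s1; rewrite /cutoff (max_idPr (le_trans ler01 s1)); apply/min_idPl. Qed.

Lemma cutoff_eq0 s : s <= 0 -> cutoff s = 0.
Proof. by move=> s0; rewrite /cutoff (max_idPl s0); apply/min_idPr. Qed.

Lemma cutoffE s : cutoff s = if s <= 0 then 0 else if s <= 1 then s else 1.
Proof.
rewrite /cutoff maxEle; case: (leP 0 s) => s0; rewrite minEle.
  by case: (leP 1 s) => s1; case: (leP s 0) => s0'; try case: (leP s 1); lra.
by case: (leP 1 0) => ?; case: (leP s 0); lra.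
Qed.

Lemma cutoff_lipschitz s t : `|cutoff s - cutoff t| <= `|s - t|.
Proof.
rewrite !cutoffE.
case: (leP s 0); case: (leP t 0); case: (leP s 1); case: (leP t 1) => *;
  rewrite ?subrr ?normr0 ?normr_ge0 // ler_norml; apply/andP; split;
  (have [st|st] := leP 0 (s - t); [rewrite ger0_norm|rewrite ltr0_norm]); lra.
Qed.

Lemma bounded_cutoff {T : Type} (g : T -> R) :
  Defs.bounded_fun (fun y => cutoff (g y)).
Proof. by exists 1 => y; rewrite ger0_norm ?cutoff_ge0 ?cutoff_le1. Qed.
End real_facts.

Lemma measurable_cutoff (R : realType) (dm : measure_display) (T : measurableType dm)
    (g : T -> R) :
  measurable_fun setT g -> measurable_fun setT (fun y => cutoff (g y)).
Proof.
move=> mg; apply: measurable_minr; first exact: measurable_cst.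
by apply: measurable_maxr => //; exact: measurable_cst.
Qed.

Section integral_bounds.
Context {R : realType} {dm : measure_display} {T : measurableType dm}.
Variable mu : {measure set T -> \bar R}.

Lemma measure_le_integral (A : set T) (f : T -> R) :
  measurable A -> measurable_fun setT f -> (forall y, \1_A y <= f y) ->
  (mu A <= \int[mu]_y (f y)%:E)%E.
Proof.
move=> mA mf Af; rewrite -(setIT A) -integral_indic //.
apply: ge0_le_integral => //; last by move=> y _; rewrite lee_fin.
- by apply/measurable_EFinP; exact: measurable_indic.
- exact/measurable_EFinP.
Qed.

Lemma integral_le_measure (A : set T) (f : T -> R) :
  measurable A -> measurable_fun setT f -> (forall y, 0 <= f y <= \1_A y) ->
  (\int[mu]_y (f y)%:E <= mu A)%E.
Proof.
move=> mA mf fA; rewrite -(setIT A) -integral_indic //.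
apply: ge0_le_integral => //.
- by move=> y _; rewrite lee_fin; case/andP: (fA y).
- exact/measurable_EFinP.
- by apply/measurable_EFinP; exact: measurable_indic.
- by move=> y _; rewrite lee_fin; case/andP: (fA y).
Qed.

Lemma le_integral_addZ (g w v : T -> R) (K : R) :
  measurable_fun setT g -> measurable_fun setT w -> measurable_fun setT v ->
  0 <= K -> (forall y, 0 <= v y) -> (forall y, 0 <= w y) ->
  (forall y, v y <= g y + K * w y) -> (\int[mu]_y (w y)%:E < +oo)%E ->
  (\int[mu]_y (v y)%:E <= \int[mu]_y (g y)%:E + K%:E * \int[mu]_y (w y)%:E)%E.
Proof.
(* g need not be integrable: only its negative part, dominated by K w, is. *)
move=> mg mw mv K0 v0 w0 vle wfin.
pose G y := (g y)%:E.
have mG : measurable_fun setT G by exact/measurable_EFinP.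
have mKw : measurable_fun setT (fun y => (K * w y)%:E).
  by apply/measurable_EFinP; apply: measurable_funM => //; exact: measurable_cst.
have Kw0 y : (0 <= (K * w y)%:E)%E by rewrite lee_fin mulr_ge0.
have intKw : (\int[mu]_y (K * w y)%:E = K%:E * \int[mu]_y (w y)%:E)%E.
  under eq_integral do rewrite EFinM.
  by rewrite ge0_integralZl_EFin //; [move=> y _; rewrite lee_fin|exact/measurable_EFinP].
have Kw_fin : (K%:E * \int[mu]_y (w y)%:E)%E \is a fin_num.
  by rewrite fin_numM // ge0_fin_numE // integral_ge0 // => y _; rewrite lee_fin.
have negG_le y : ((G^\-)%E y <= (K * w y)%:E)%E.
  rewrite funenegE /G -EFinN -EFin_max lee_fin ge_max mulr_ge0 // andbT.
  by have := vle y; have := v0 y; lra.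
have posG_ge y : ((v y)%:E + (G^\-)%E y <= (G^\+)%E y + (K * w y)%:E)%E.
  rewrite funenegE funeposE /G -EFinN -!EFin_max -!EFinD lee_fin.
  have := vle y; have [g0|g0] := leP 0 (g y).
    by rewrite (max_idPr _) ?oppr_le0 //; lra.
  by rewrite (max_idPl _); lra.
have negG_fin : (\int[mu]_y (G^\-)%E y)%E \is a fin_num.
  rewrite ge0_fin_numE; last by apply: integral_ge0 => y _; exact: funeneg_ge0.
  apply: (le_lt_trans (ge0_le_integral mu measurableT _ _ mKw (fun y _ => negG_le y))).
  - by move=> y _; exact: funeneg_ge0.
  - exact: measurable_funeneg.
  - by rewrite intKw -ge0_fin_numE // mule_ge0 ?integral_ge0 // => y _; rewrite lee_fin.
rewrite [X in (_ <= X + _)%E]integralE addeAC leeBrDr // -intKw.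
have mv' : measurable_fun setT (fun y => (v y)%:E) by exact/measurable_EFinP.
have mnegG := measurable_funeneg mG; have mposG := measurable_funepos mG.
rewrite -!ge0_integralD //; try by move=> y _; rewrite ?lee_fin ?funeneg_ge0 ?funepos_ge0.
apply: ge0_le_integral => //; try exact: emeasurable_funD.
by move=> y _; rewrite adde_ge0 ?lee_fin ?funeneg_ge0.
Qed.
End integral_bounds.

Definition dball {R : realType} {X : Type} (d : X -> X -> R) (x0 : X) (r : R) : set X :=
  [set y | d x0 y <= r].

Section metric_probability.
Context {R : realType} {dm : measure_display} {X : measurableType dm}.
Context {d : X -> X -> R}.
Hypothesis d_metric : is_metric d.
Hypothesis measurable_d_open : (@measurable dm X) = <<s d_open d >>.

Lemma measurable_dist x : measurable_fun setT (d x).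
Proof.
have [_ _ _ d_tri] := d_metric.
apply: (measurability _ (RGenInftyO.measurableE R)).
move=> _ [_ [c ->] <-]; rewrite setTI measurable_d_open.
apply: sub_sigma_algebra => y /=; rewrite in_itv /= => dxy.
exists (c - d x y) => [|z]; first by rewrite subr_gt0.
by rewrite /= in_itv /=; have := d_tri x y z; lra.
Qed.

Lemma metric_lerB x0 x y : d x0 x - d x0 y <= d x y.
Proof.
have [_ _ d_sym d_tri] := d_metric.
by have := d_tri x0 y x; rewrite (d_sym y x); lra.
Qed.

Lemma measurable_dball x0 r : measurable (dball d x0 r).
Proof.
rewrite (_ : dball d x0 r = d x0 @^-1` `]-oo, r]); last first.
  by apply/seteqP; split => y /=; rewrite in_itv.
by rewrite -[_ @^-1` _]setTI; exact: measurable_dist.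
Qed.

Lemma le_dball x0 r r' : r <= r' -> dball d x0 r `<=` dball d x0 r'.
Proof. by move=> rr' y /le_trans; apply. Qed.

Lemma probability_dball_gt (P : probability X R) x0 (a : R) :
  a < 1 -> exists k : nat, (a%:E < P (dball d x0 k%:R))%E.
Proof.
move=> a1.
have cover : \bigcup_k dball d x0 k%:R = setT.
  apply/seteqP; split => // y _; exists (Num.truncn (d x0 y)).+1 => //.
  exact/ltW/truncnS_gt.
have nd : {homo (fun k => dball d x0 k%:R) : i j / (i <= j)%N >-> (i <= j)%O}.
  by move=> i j ij; apply/subsetPset/le_dball; rewrite ler_nat.
have mcover : measurable (\bigcup_k dball d x0 k%:R) by rewrite cover.
have := @nondecreasing_cvg_mu _ X R P _ (fun k => measurable_dball x0 _) mcover nd.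
rewrite cover [X in _ --> X]probability_setT => cvg1.
have [N _ PN] := cvg1 _ (nbhs_open_ereal_gt (f := fun=> a) a1).
by exists N; apply: PN => /=.
Qed.

Lemma d_continuous_cutoff x0 c : d_continuous d (fun y => cutoff (c - d x0 y)).
Proof.
have [_ _ d_sym _] := d_metric.
move=> x e e0; exists e => // y dxy; apply: le_lt_trans (cutoff_lipschitz _ _) _.
have := metric_lerB x0 x y; have := metric_lerB x0 y x; rewrite (d_sym y x) => h1 h2.
by rewrite ltr_norml; apply/andP; split; lra.
Qed.

Lemma measurable_cutoff_dist x0 c : measurable_fun setT (fun y => cutoff (c - d x0 y)).
Proof.
apply: measurable_cutoff; apply: measurable_funB; first exact: measurable_cst.
exact: measurable_dist.
Qed.

Lemma measure_dball_le_integral_cutoff (mu : {measure set X -> \bar R}) x0 c :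
  (mu (dball d x0 (c - 1)) <= \int[mu]_y (cutoff (c - d x0 y))%:E)%E.
Proof.
apply: measure_le_integral => [||y]; first exact: measurable_dball.
  exact: measurable_cutoff_dist.
rewrite /indic; case: (boolP (y \in _)) => [|_]; last exact: cutoff_ge0.
by rewrite inE /dball /= => yc; rewrite cutoff_eq1 //; lra.
Qed.

Lemma integral_cutoff_le_measure_dball (mu : {measure set X -> \bar R}) x0 c :
  (\int[mu]_y (cutoff (c - d x0 y))%:E <= mu (dball d x0 c))%E.
Proof.
apply: integral_le_measure => [||y]; first exact: measurable_dball.
  exact: measurable_cutoff_dist.
rewrite /indic cutoff_ge0 /=; case: (boolP (y \in _)) => [_|]; first exact: cutoff_le1.
rewrite notin_setE /dball /= => /negP; rewrite -ltNge => yc.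
by rewrite cutoff_eq0 //; lra.
Qed.

Lemma cvg_tau_w_dball {q : R} {mun : nat -> probability X R} {mu : probability X R}
    x0 {a : R} :
  a < 1 -> cvg_tau_w d q mun mu ->
  exists2 r, 0 <= r & forall n, (a%:E < mun n (dball d x0 r))%E.
Proof.
move=> a1 [cvg_weak _].
have [k mu_k] := probability_dball_gt mu x0 _ a1.
pose f y := cutoff (k%:R + 1 - d x0 y).
have f_fin : (\int[mu]_y (f y)%:E)%E \is a fin_num.
  rewrite ge0_fin_numE; last by apply: integral_ge0 => y _; rewrite lee_fin cutoff_ge0.
  apply: le_lt_trans (integral_cutoff_le_measure_dball mu x0 _) _.
  by apply: le_lt_trans (probability_le1 _ (measurable_dball _ _)) _; rewrite ltry.
have cvg_f : (\int[mun n]_y (f y)%:E @[n --> \oo] --> (fine (\int[mu]_y (f y)%:E))%:E)%E.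
  by rewrite fineK //; exact: cvg_weak _ (d_continuous_cutoff _ _) (bounded_cutoff _).
have a_lt : a < fine (\int[mu]_y (f y)%:E)%E.
  rewrite -lte_fin fineK //; apply: lt_le_trans mu_k _.
  by have := measure_dball_le_integral_cutoff mu x0 (k%:R + 1); rewrite addrK.
apply: (uniform_upclosed (fun n r => a%:E < mun n (dball d x0 r))%E).
- move=> n r r' rr' /lt_le_trans; apply; apply: le_measure; rewrite ?inE;
    [exact: measurable_dball|exact: measurable_dball|exact: le_dball].
- by move=> n; have [k' ?] := probability_dball_gt (mun n) x0 _ a1; exists k'%:R.
- exists (k%:R + 1).
  have near_a : \forall n \near \oo, (a%:E < \int[mun n]_y (f y)%:E)%E.
    exact: cvg_f _ (nbhs_open_ereal_gt (f := fun=> a) a_lt).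
  apply: filterS near_a => n /lt_le_trans; apply.
  exact: integral_cutoff_le_measure_dball.
Qed.

Lemma cvg_tau_w_moment {q : R} {mun : nat -> probability X R} {mu : probability X R} x0 :
  (forall n, in_Pr d q (mun n)) -> in_Pr d q mu -> cvg_tau_w d q mun mu ->
  exists2 M, 0 <= M & forall n, (\int[mun n]_y ((d x0 y) `^ q)%:E <= M%:E)%E.
Proof.
move=> mun_q mu_q [_ cvg_moment].
pose m (P : probability X R) := (\int[P]_y ((d x0 y) `^ q)%:E)%E.
have m_fin P : in_Pr d q P -> m P \is a fin_num.
  move=> Pq; rewrite ge0_fin_numE ?Pq //.
  by apply: integral_ge0 => y _; rewrite lee_fin powR_ge0.
apply: (uniform_upclosed (fun n M => m (mun n) <= M%:E)%E).
- by move=> n M M' MM' /le_trans; apply; rewrite lee_fin.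
- by move=> n; exists (fine (m (mun n))); rewrite fineK // m_fin.
- exists (fine (m mu) + 1).
  have cvg_m : (m (mun n) @[n --> \oo] --> (fine (m mu))%:E)%E.
    by rewrite fineK ?m_fin //; exact: cvg_moment.
  have near_m : \forall n \near \oo, (m (mun n) < (fine (m mu) + 1)%:E)%E.
    have lt1 : fine (m mu) < fine (m mu) + 1 by rewrite ltrDl.
    exact: cvg_m _ (nbhs_open_ereal_lt (f := fun t => t + 1) lt1).
  by apply: filterS near_m => n /ltW.
Qed.

Lemma measurable_powR_dist z (s : R) : measurable_fun setT (fun y => d z y `^ s).
Proof. exact: measurableT_comp (measurable_powR s) (measurable_dist z). Qed.

Lemma powR_dist_lbound (p : R) x0 x y : 1 <= p ->
  0 <= d x y `^ p - d x0 y `^ p + p * d x0 x * d x0 y `^ (p - 1).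
Proof.
have [d_ge0 _ d_sym _] := d_metric.
move=> p1; have := powRB_le_tangent _ _ _ p1 (d_ge0 x y) (d_ge0 x0 y).
have := metric_lerB y x0 x; rewrite !(d_sym y) => dB.
have : p * d x0 y `^ (p - 1) * (d x0 y - d x y) <= p * d x0 y `^ (p - 1) * d x0 x.
  by rewrite ler_wpM2l // mulr_ge0 ?powR_ge0 //; lra.
lra.
Qed.

Lemma Wp_lbound (p : R) (P : probability X R) x0 x (r a M c : R) :
  1 <= p -> 0 <= c -> (a%:E <= P (dball d x0 r))%E ->
  (\int[P]_y ((d x0 y) `^ (p - 1))%:E <= M%:E)%E ->
  (forall y, d x0 y <= r ->
     c <= d x y `^ p - d x0 y `^ p + p * d x0 x * d x0 y `^ (p - 1)) ->
  ((c * a - p * d x0 x * M)%:E <= Wp d p P x x0)%E.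
Proof.
have [d_ge0 _ _ _] := d_metric.
move=> p1 c0 Pa PM c_le; set D := d x0 x.
have pD0 : 0 <= p * D by rewrite mulr_ge0 ?d_ge0 //; lra.
have mB := measurable_dball x0 r.
have v_le y : c * \1_(dball d x0 r) y <=
    (d x y `^ p - d x0 y `^ p) + p * D * d x0 y `^ (p - 1).
  rewrite /indic -mulrA; case: (boolP (y \in _)) => [|_]; rewrite ?mulr1 ?mulr0.
    by rewrite inE mulrA => /c_le.
  by rewrite mulrA; exact: powR_dist_lbound.
have mv : measurable_fun setT (fun y => c * \1_(dball d x0 r) y).
  exact: measurable_funM (measurable_cst c) (measurable_indic mB).
have int_v : (\int[P]_y (c * \1_(dball d x0 r) y)%:E = c%:E * P (dball d x0 r))%E.
  under eq_integral do rewrite EFinM.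
  rewrite ge0_integralZl_EFin ?integral_indic ?setIT //.
  by apply/measurable_EFinP; exact: measurable_indic.
have w_fin : (\int[P]_y (d x0 y `^ (p - 1))%:E < +oo)%E.
  exact: le_lt_trans PM (ltry _).
have := le_integral_addZ P _ _ _ _ (measurable_funB (measurable_powR_dist x p)
  (measurable_powR_dist x0 p)) (measurable_powR_dist x0 (p - 1)) mv pD0
  (fun y => mulr_ge0 c0 (ler0n _ _)) (fun y => powR_ge0 _ _) v_le w_fin.
rewrite int_v => v_int.
have ca : ((c * a)%:E <= c%:E * P (dball d x0 r))%E.
  by rewrite EFinM; apply: lee_wpmul2l; rewrite ?lee_fin.
have pDM : ((p * D)%:E * \int[P]_y (d x0 y `^ (p - 1))%:E <= (p * D * M)%:E)%E.
  by rewrite (EFinM (p * D)); apply: lee_wpmul2l; rewrite ?lee_fin.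
rewrite EFinB leeBlDr //; apply: le_trans ca (le_trans v_int _).
exact: leeD2l pDM.
Qed.

Lemma dist_le_of_W1_le (P : probability X R) x0 x (r C : R) : 0 <= C ->
  ((3/4)%:E < P (dball d x0 r))%E -> (Wp d 1 P x x0 <= C%:E)%E ->
  d x0 x <= 2 * C + 3 * r.
Proof.
have [d_ge0 _ _ _] := d_metric.
move=> C0 Pr WC; have [Dr|rD] := leP (d x0 x) r; first by have := d_ge0 x0 x; lra.
have P1 : (\int[P]_y ((d x0 y) `^ (1 - 1))%:E <= 1%:E)%E.
  rewrite subrr; under eq_integral do rewrite powRr0.
  by rewrite integral_cst // mul1e probability_le1.
have c0 : 0 <= 2 * d x0 x - 2 * r by lra.
have c_le y : d x0 y <= r ->
    2 * d x0 x - 2 * r <= d x y `^ 1 - d x0 y `^ 1 + 1 * d x0 x * d x0 y `^ (1 - 1).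
  by rewrite subrr powRr0 !powRr1 ?d_ge0 // => yr; have := metric_lerB x0 x y; lra.
have := Wp_lbound _ P x0 x _ _ _ _ (lexx 1) c0 (ltW Pr) P1 c_le.
by move=> /le_trans /(_ WC); rewrite lee_fin; lra.
Qed.

Lemma dist_le_of_Wp_le_gt1 (p : R) (P : probability X R) x0 x (r M C : R) :
  1 < p -> 0 <= r -> 0 <= M -> 0 <= C ->
  ((3/4)%:E < P (dball d x0 r))%E ->
  (\int[P]_y ((d x0 y) `^ (p - 1))%:E <= M%:E)%E ->
  (Wp d p P x x0 <= C%:E)%E ->
  d x0 x <= 2 * r + 1 + ((4/3) * (p * M * (1 + r) + 1)) `^ (p - 1)^-1
            + (4/3) * C + r `^ p.
Proof.
have [d_ge0 _ _ _] := d_metric.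
move=> p_gt1 r0 M0 C0 Pr PM WC; rewrite leNgt; apply/negP.
set A := (4/3) * _ => DK.
(* For E := d x0 x - r, E^(p-1) >= A gives (3/4) E^p >= p M (E + r) + E,
   while E exceeds C + (3/4) r^p. *)
pose E := d x0 x - r.
have A0 : 0 <= A by rewrite /A !(mulr_ge0, addr_ge0) //; lra.
have rp0 := powR_ge0 r p; have Aroot0 := powR_ge0 A (p - 1)^-1.
have E1 : 1 <= E by rewrite /E; lra.
have EC : (4/3) * C + r `^ p + 1 <= E by rewrite /E; lra.
have AE : A <= E `^ (p - 1).
  have : A `^ (p - 1)^-1 <= E by rewrite /E; lra.
  move/(ler_powR2r (p - 1)); rewrite -powRrM mulVf ?powRr1 ?subr_eq0 ?gt_eqF //.
  by apply; lra.
have c0 : 0 <= E `^ p - r `^ p by rewrite subr_ge0; apply: ler_powR2r; rewrite /E; lra.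
have c_le y : d x0 y <= r ->
    E `^ p - r `^ p <= d x y `^ p - d x0 y `^ p + p * d x0 x * d x0 y `^ (p - 1).
  move=> yr; have dB := metric_lerB x0 x y.
  have : E `^ p <= d x y `^ p by apply: ler_powR2r; rewrite /E; lra.
  have : d x0 y `^ p <= r `^ p by apply: ler_powR2r; rewrite ?d_ge0; lra.
  have : 0 <= p * d x0 x * d x0 y `^ (p - 1).
    by rewrite !mulr_ge0 ?powR_ge0 ?d_ge0 //; lra.
  lra.
have := Wp_lbound _ P x0 x _ _ _ _ (ltW p_gt1) c0 (ltW Pr) PM c_le.
move=> /le_trans /(_ WC); rewrite lee_fin => key.
have EA : E * A <= E `^ p by rewrite -mulr_powRB1 ?ler_wpM2l //; lra.
have : 0 <= p * M * r * (E - 1) by rewrite !mulr_ge0 //; lra.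
have DE : d x0 x = E + r by rewrite /E; ring.
rewrite DE in key; rewrite /A in EA.
nra.
Qed.

Lemma dist_le_of_Wp_le {p : R} x0 {r M C : R} :
  1 <= p -> 0 <= r -> 0 <= M -> 0 <= C ->
  exists K, forall (P : probability X R) x,
    ((3/4)%:E < P (dball d x0 r))%E ->
    (\int[P]_y ((d x0 y) `^ (p - 1))%:E <= M%:E)%E ->
    (Wp d p P x x0 <= C%:E)%E -> d x0 x <= K.
Proof.
move=> p1 r0 M0 C0; have [->|pn1] := eqVneq p 1.
  by exists (2 * C + 3 * r) => P x Pr _; exact: dist_le_of_W1_le.
have p_gt1 : 1 < p by rewrite lt_neqAle eq_sym pn1.
by eexists => P x; exact: dist_le_of_Wp_le_gt1.
Qed.
End metric_probability.

Theorem lemma3p6 (R : realType) (dm : measure_display) (X : measurableType dm)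
  (d : X -> X -> R) (hd : is_metric d)
  (hborel : (@measurable dm X) = <<s d_open d >>)
  (hsep : d_separable d) (p : R) (hp : 1 <= p)
  (mun : nat -> probability X R) (mu : probability X R)
  (hmun : forall n, in_Pr d (p - 1) (mun n)) (hmu : in_Pr d (p - 1) mu)
  (hcvg : cvg_tau_w d (p - 1) mun mu)
  (eps : nat -> R) (heps0 : forall n, 0 <= eps n)
  (hepsb : exists C : R, forall n, eps n <= C) :
  exists B : set X, d_bounded d B /\ forall n, Mp d p (mun n) (eps n) `<=` B.
Proof.
pose x0 : X := point.
have lt34 : 3/4 < 1 :> R by lra.
have [r r0 mun_r] := cvg_tau_w_dball hd hborel x0 lt34 hcvg.
have [M M0 mun_M] := cvg_tau_w_moment x0 hmun hmu hcvg.
have [C epsC] := hepsb.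
have [K dK] := dist_le_of_Wp_le hd hborel x0 hp r0 M0 (le_trans (heps0 0) (epsC 0)).
exists (dball d x0 K); split; first by exists x0, K.
move=> n x Mx; apply: dK (mun_r n) (mun_M n) _.
by apply: le_trans (Mx x0) _; rewrite lee_fin.
Qed.
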